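(* For any type $A$, the type $A^{\circ}$ of isolated points of $A$ is discrete, and hence a set.
   Context: Homotopy Type Theory. A point $a:A$ is isolated if $a=b$ is decidable for every $b:A$, i.e. $\mathrm{isIsolated}(a):=\prod_{b:A}\mathrm{Dec}(a=b)$, and $A^{\circ}:=\sum_{a:A}\mathrm{isIsolated}(a)$. A type is discrete if equality on it is decidable. *)

Definition Dec (P : Type) : Type := (P + (P -> False))%type.

Definition isIsolated {A : Type} (a : A) : Type := forall b : A, Dec (a = b).

Definition isolatedPoints (A : Type) : Type := { a : A & isIsolated a }.

Definition isDiscrete (A : Type) : Type := forall x y : A, Dec (x = y).

Definition isSet (A : Type) : Prop := forall (x y : A) (p q : x = y), p = q.

From Stdlib Require Import FunctionalExtensionality.

(* Hedberg's argument, localised at one point: if [a] is isolated, the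
   decision procedure yields a constant map on each [a = b], and every path
   [p] is recovered from its image, so all paths out of [a] are equal.  With
   function extensionality, [Dec (a = b)] and hence [isIsolated a] are then
   propositions, so a point of [A°] is determined by its underlying point of
   [A], whose isolatedness decides equality in [A°].  Discrete types are sets
   because each of their points is isolated. *)

Section IsolatedPoint.

Variables (A : Type) (a : A) (ia : isIsolated a).

Lemma isolated_paths_eq (b : A) (p q : a = b) : p = q.
Proof.
  pose (collapse b (p : a = b) :=
    match ia b with inl r => r | inr n => match n p with end end).
  assert (collapse_const : forall b (p q : a = b), collapse b p = collapse b q).
  { intros b' p' q'; unfold collapse; destruct (ia b') as [r | n];
      [reflexivity | destruct (n p')]. }
  assert (retract : forall b (p : a = b),
            p = eq_trans (eq_sym (collapse a eq_refl)) (collapse b p)).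
  { intros b' p'; destruct p'; destruct (collapse a eq_refl); reflexivity. }
  rewrite (retract b p), (retract b q), (collapse_const b p q); reflexivity.
Qed.

Lemma Dec_isolated_eq (b : A) (d e : Dec (a = b)) : d = e.
Proof.
  destruct d as [p | n], e as [q | m].
  - f_equal; apply isolated_paths_eq.
  - destruct (m p).
  - destruct (n q).
  - f_equal; apply functional_extensionality; intros p; destruct (n p).
Qed.

End IsolatedPoint.

Lemma isIsolated_eq {A : Type} (a : A) (i j : isIsolated a) : i = j.
Proof.
  apply functional_extensionality_dep; intros b; exact (Dec_isolated_eq A a i b _ _).
Qed.

Lemma isolatedPoints_eq {A : Type} (x y : isolatedPoints A) :
  projT1 x = projT1 y -> x = y.
Proof.
  destruct x as [a ia], y as [b ib]; simpl; intros e; destruct e.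
  f_equal; apply isIsolated_eq.
Qed.

Lemma isDiscrete_isolatedPoints (A : Type) : isDiscrete (isolatedPoints A).
Proof.
  intros x y; destruct (projT2 x (projT1 y)) as [e | ne].
  - left; exact (isolatedPoints_eq x y e).
  - right; intros e; exact (ne (f_equal (@projT1 _ _) e)).
Qed.

Lemma isDiscrete_isSet (A : Type) : isDiscrete A -> isSet A.
Proof.
  intros dA x; exact (isolated_paths_eq A x (dA x)).
Qed.

Theorem proposition2p4 (A : Type) :
  isDiscrete (isolatedPoints A) * isSet (isolatedPoints A).
Proof.
  split.
  - apply isDiscrete_isolatedPoints.
  - apply isDiscrete_isSet, isDiscrete_isolatedPoints.
Qed.
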